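(* With the notation of the context, there is a surjective quandle homomorphism $\tilde R_{2n+1} \to R_{2n+1}$.
   Context: A quandle is a set $X$ with a binary operation $\triangleleft$ such that (I) $a \triangleleft a = a$; (II) for all $a,b$ there is a unique $c$ with $a = c\triangleleft b$; (III) $(a\triangleleft b)\triangleleft c = (a\triangleleft c)\triangleleft(b \triangleleft c)$; a quandle homomorphism $f$ satisfies $f(a\triangleleft b)=f(a)\triangleleft f(b)$. Fix $n\ge1$, $m=2n+1$. For a permutation $\sigma$ of $\{1,\dots,m\}$ and signs $\epsilon_i\in\{\pm1\}$, write $(\epsilon_1\sigma(1),\dots,\epsilon_m\sigma(m))$ for the $m\times m$ signed permutation matrix whose $i$-th column is $\epsilon_i e_{\sigma(i)}$, $e_j$ the standard basis column vectors. Let $a = (1, 2n+1, 2n, \ldots, n+2, -(n+1), \ldots, -3, -2)$ (column $1$ is $e_1$, column $i$ is $e_{2n+3-i}$ for $2\le i\le n+1$, column $i$ is $-e_{2n+3-i}$ for $n+2\le i\le 2n+1$) and $b = (2n+1, 1, 2, \ldots, 2n)$ (column $1$ is $e_{2n+1}$, column $i$ is $e_{i-1}$ for $i\ge2$). Let $G_{2n+1}$ be the matrix group generated by $a$ and $b$, let $H = C(a) = \{c\in G_{2n+1} : ac = ca\}$, and let $\tilde R_{2n+1}$ be the set of right cosets $Hu$ ($u\in G_{2n+1}$) with quandle operation $Hu \triangleleft Hv = H\,uv^{-1}av$. $R_{2n+1}$ is the dihedral quandle on $\{0,1,\dots,2n\}$ with $i\triangleleft j \equiv 2j - i \pmod{2n+1}$.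 *)

From HB Require Import structures.
From mathcomp Require Import all_boot all_order all_algebra.
Set Implicit Arguments. Unset Strict Implicit. Unset Printing Implicit Defensive.
Import GRing.Theory Num.Theory.
Local Open Scope ring_scope.

(* m = 2n+1; matrices are m x m integer matrices, indices 0-based
   (paper index i corresponds to ordinal i-1). *)
Notation mdim n := (n.*2.+1)%N.
Notation smx n := ('M[int]_(mdim n)).

(* a = (1, 2n+1, 2n, ..., n+2, -(n+1), ..., -2): column c (0-based) is
   +/- e_{(m - c) mod m}, with sign + iff c <= n. *)
Definition mat_a (n : nat) : smx n :=
  \matrix_(r < mdim n, c < mdim n)
    (if (r : nat) == ((mdim n - c) %% mdim n)%N
     then (if (c <= n)%N then 1 else -1) else 0).

(* b = (2n+1, 1, 2, ..., 2n): column c (0-based) is e_{(c + m - 1) mod m}. *)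
Definition mat_b (n : nat) : smx n :=
  \matrix_(r < mdim n, c < mdim n)
    (if (r : nat) == ((c + (mdim n).-1) %% mdim n)%N then 1 else 0).

Inductive in_G (n : nat) : smx n -> Prop :=
  | inG_a : in_G (mat_a n)
  | inG_b : in_G (mat_b n)
  | inG_1 : in_G 1%:M
  | inG_mul x y : in_G x -> in_G y -> in_G (x *m y)
  | inG_inv x : in_G x -> in_G (invmx x).
Arguments in_G : clear implicits.

Definition in_H (n : nat) (c : smx n) : Prop :=
  in_G n c /\ mat_a n *m c = c *m mat_a n.
Arguments in_H : clear implicits.

Definition rcoset (n : nat) (u : smx n) : smx n -> Prop :=
  fun x => exists h, in_H n h /\ x = h *m u.
Arguments rcoset : clear implicits.

(* Dihedral quandle R_{2n+1} on {0,...,2n}: i <| j = 2j - i mod 2n+1. *)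
Definition dih_op (n : nat) (i j : 'I_(mdim n)) : 'I_(mdim n) :=
  inZp (j.*2 + (mdim n - i))%N.

(* Every element of G is a signed permutation matrix whose underlying
   permutation of Z/m is affine, x |-> +-x + t; for a it is x |-> -x and for b
   it is x |-> x - 1.  Send u to u^{-1}(0), i.e. the column of the nonzero
   entry in row 0 of u.  An element of C(a) has an affine map commuting with
   x |-> -x, hence fixing 0 (m is odd), so this is constant on right cosets
   Hu.  Conjugating a by v gives the point reflection through v^{-1}(0), which
   yields the dihedral law, and u b^k is sent to k. *)
From mathcomp Require Import all_boot all_algebra.
From Stdlib Require Import ClassicalEpsilon.
Import GRing.Theory.
Local Open Scope ring_scope.
Set Implicit Arguments. Unset Strict Implicit.

Section AffineMaps.
Variable V : zmodType.
Implicit Types (s : bool) (t x y : V).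

Definition flip s x := if s then - x else x.
Definition aff s t x := flip s x + t.
Definition aff_inv s t x := flip s (x - t).

Lemma flipK s : involutive (flip s). Proof. by case: s => x; rewrite /flip ?opprK. Qed.
Lemma flipD s x y : flip s (x + y) = flip s x + flip s y.
Proof. by case: s; rewrite /flip ?opprD. Qed.
Lemma flipN s x : flip s (- x) = - flip s x. Proof. by case: s. Qed.
Lemma flip0 s : flip s 0 = 0 :> V. Proof. by case: s; rewrite /flip ?oppr0. Qed.
Lemma flip_flip s1 s2 x : flip s1 (flip s2 x) = flip (s1 (+) s2) x.
Proof. by case: s1; case: s2; rewrite /flip /= ?opprK. Qed.

Lemma affK s t : cancel (aff s t) (aff_inv s t).
Proof. by move=> x; rewrite /aff_inv /aff addrK flipK. Qed.
Lemma aff_invK s t : cancel (aff_inv s t) (aff s t).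
Proof. by move=> x; rewrite /aff_inv /aff flipK subrK. Qed.

Lemma aff_invE s t : aff_inv s t =1 aff s (flip s (- t)).
Proof. by move=> x; rewrite /aff_inv /aff flipD. Qed.
Lemma aff_comp s1 t1 s2 t2 :
  aff s1 t1 \o aff s2 t2 =1 aff (s1 (+) s2) (aff s1 t1 t2).
Proof. by move=> x; rewrite /= /aff flipD flip_flip addrA. Qed.

Lemma aff_reflect s t x y : aff s t y = 0 -> aff s t (y + y - x) = - aff s t x.
Proof.
rewrite /aff => /eqP; rewrite addr_eq0 => /eqP fyNt.
by rewrite !flipD flipN fyNt addrAC addrNK opprD addrC.
Qed.

End AffineMaps.

Lemma Zp_double_eq0 p (t : 'I_p.+1) : odd p.+1 -> t + t = 0 -> t = 0.
Proof.
move=> odd_p /(congr1 val) /= tt0; apply: val_inj => /=.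
have : (p.+1 %| 2 * t)%N by rewrite mul2n -addnn /dvdn tt0.
rewrite Gauss_dvdr; last by rewrite coprimen2 odd_p.
by rewrite /dvdn modn_small ?ltn_ord // => /eqP.
Qed.

Lemma oppr_ord_max p : - (ord_max : 'I_p.+1) = Zp1.
Proof. by apply: val_inj; rewrite /= subSnn. Qed.

Lemma Zp1_mulrn p (k : 'I_p.+1) : (0 < p)%N -> Zp1 *+ k = k.
Proof. by move=> p_gt0; rewrite Zp_mulrn /= modn_small ?ltnS // mul1n valZpK. Qed.

Section SignedPermMx.
Variables (R : idomainType) (k : nat).
Implicit Types (A B : 'M[R]_k) (g h : 'I_k -> 'I_k).

(* Squaring the entries forgets the signs: A is a signed permutation matrix
   with A (g j) j = +-1 and all other entries 0. *)
Definition signed_perm_mx A g := forall i j, A i j ^+ 2 = (i == g j)%:R.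

Lemma signed_perm_mx_eq A g h : signed_perm_mx A g -> g =1 h -> signed_perm_mx A h.
Proof. by move=> Ag gh i j; rewrite Ag gh. Qed.

Lemma signed_perm_mx0 A g i j : signed_perm_mx A g -> i != g j -> A i j = 0.
Proof. by move=> Ag /negbTE ij; apply/eqP; rewrite -sqrf_eq0 Ag ij. Qed.

Lemma signed_perm_mx_uniq A g h : signed_perm_mx A g -> signed_perm_mx A h -> g =1 h.
Proof.
move=> Ag Ah j; have := Ah (g j) j; rewrite Ag eqxx.
by case: eqP => // _ /eqP; rewrite oner_eq0.
Qed.

Lemma signed_perm_mx1 : signed_perm_mx 1%:M id.
Proof. by move=> i j; rewrite mxE; case: (i == j); rewrite ?expr1n ?expr0n. Qed.

Lemma signed_perm_mxM A B g h :
  signed_perm_mx A g -> signed_perm_mx B h -> signed_perm_mx (A *m B) (g \o h).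
Proof.
move=> Ag Bh i j; rewrite !mxE (bigD1 (h j)) //= big1 ?addr0.
  by rewrite exprMn Ag Bh eqxx mulr1.
by move=> l lj; rewrite (signed_perm_mx0 Bh) ?mulr0.
Qed.

Section Inverse.
Variables (A : 'M[R]_k) (g g' : 'I_k -> 'I_k).
Hypotheses (Ag : signed_perm_mx A g) (gK : cancel g g') (g'K : cancel g' g).

Lemma signed_perm_mx_tr : signed_perm_mx A^T g'.
Proof.
move=> i j; rewrite mxE Ag.
suff -> : (j == g i) = (i == g' j) by [].
by apply/eqP/eqP => [->|->]; rewrite ?gK ?g'K.
Qed.

Lemma signed_perm_mx_orth : A *m A^T = 1%:M.
Proof.
apply/matrixP => i i'; rewrite !mxE (bigD1 (g' i)) //= big1.
  rewrite mxE addr0; have [<-|ii'] := eqVneq i i'; first by rewrite -expr2 Ag g'K eqxx.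
  by rewrite (signed_perm_mx0 (i := i') Ag) ?mulr0 // g'K eq_sym.
move=> j ji; rewrite mxE; have [ig|ig] := eqVneq i (g j).
  by move: ji; rewrite ig gK eqxx.
by rewrite (signed_perm_mx0 Ag ig) mul0r.
Qed.

Lemma signed_perm_mxV : signed_perm_mx (invmx A) g'.
Proof.
have [A_unit _] := mulmx1_unit signed_perm_mx_orth.
suff -> : invmx A = A^T by exact: signed_perm_mx_tr.
by rewrite -[A^T]mul1mx -(mulVmx A_unit) -mulmxA signed_perm_mx_orth mulmx1.
Qed.

End Inverse.
End SignedPermMx.

Section RowZero.
Variables (R : idomainType) (k : nat).
Implicit Types (A : 'M[R]_k.+1) (g : 'I_k.+1 -> 'I_k.+1).

Definition row0_col A : 'I_k.+1 := odflt 0 [pick j | A 0 j != 0].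

Lemma row0_colP A g j : signed_perm_mx A g -> injective g -> g j = 0 -> row0_col A = j.
Proof.
move=> Ag g_inj gj0; rewrite /row0_col; case: pickP => [j' A0j'|A0] /=.
  apply: g_inj; rewrite gj0; apply/eqP; rewrite eq_sym.
  by apply: contraR A0j' => /(signed_perm_mx0 Ag) ->.
by have := A0 j; rewrite -sqrf_eq0 Ag gj0 eqxx oner_eq0.
Qed.

Lemma row0_col_can A g g' : signed_perm_mx A g -> cancel g g' -> cancel g' g ->
  row0_col A = g' 0.
Proof. by move=> Ag gK g'K; apply: row0_colP Ag (can_inj gK) (g'K 0). Qed.

End RowZero.

Section Dihedral.
Variable n : nat.
Local Notation I := 'I_(mdim n).
Implicit Types (u v h : smx n) (s : bool) (t : I).

Lemma signed_perm_mx_a : signed_perm_mx (mat_a n) (aff true 0).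
Proof.
move=> r c; rewrite mxE /aff /flip addr0.
have -> : ((r : nat) == (mdim n - c) %% mdim n)%N = (r == - c) by [].
by case: (r == - c); case: (c <= n)%N; rewrite ?sqrrN ?expr1n ?expr0n.
Qed.

Lemma signed_perm_mx_b : signed_perm_mx (mat_b n) (aff false ord_max).
Proof.
move=> r c; rewrite mxE /aff /flip.
have -> : ((r : nat) == (c + (mdim n).-1) %% mdim n)%N = (r == c + ord_max) by [].
by case: (r == c + ord_max); rewrite ?expr1n ?expr0n.
Qed.

Lemma in_G_affine u : in_G n u -> exists s t, signed_perm_mx u (aff s t).
Proof.
elim=> {u} [| | | x y _ [s1 [t1 x_aff]] _ [s2 [t2 y_aff]] | x _ [s [t x_aff]]].
- by exists true, 0; exact: signed_perm_mx_a.
- by exists false, ord_max; exact: signed_perm_mx_b.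
- by exists false, 0; apply: (signed_perm_mx_eq (@signed_perm_mx1 _ _)) => x; rewrite /aff addr0.
- exists (s1 (+) s2), (aff s1 t1 t2).
  exact: signed_perm_mx_eq (signed_perm_mxM x_aff y_aff) (aff_comp _ _ _ _).
- exists s, (flip s (- t)).
  exact: signed_perm_mx_eq (signed_perm_mxV x_aff (affK s t) (aff_invK s t)) (aff_invE s t).
Qed.

(* An affine map commuting with x |-> -x sends 0 to t = -t, and m is odd. *)
Lemma commute_a_aff h s t :
  signed_perm_mx h (aff s t) -> mat_a n *m h = h *m mat_a n -> t = 0.
Proof.
move=> h_aff ah_ha.
have ah := signed_perm_mxM signed_perm_mx_a h_aff.
rewrite ah_ha in ah; have := signed_perm_mx_uniq ah (signed_perm_mxM h_aff signed_perm_mx_a) 0.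
rewrite /aff /flip /= !(oppr0, addr0, add0r, if_same) => tNt.
by apply: Zp_double_eq0; [rewrite /= odd_double | rewrite -{1}tNt addNr].
Qed.

Lemma in_G_conj_a u v : in_G n u -> in_G n v -> in_G n (u *m invmx v *m mat_a n *m v).
Proof. by move=> Gu Gv; apply: inG_mul (inG_mul (inG_mul Gu (inG_inv Gv)) (inG_a n)) Gv. Qed.

Lemma row0_colG_zero u g : in_G n u -> signed_perm_mx u g -> g (row0_col u) = 0.
Proof.
move=> /in_G_affine [s [t u_aff]] u_g.
rewrite (row0_col_can u_aff (affK s t) (aff_invK s t)).
by rewrite -(signed_perm_mx_uniq u_aff u_g) aff_invK.
Qed.

Lemma row0_colG u g c : in_G n u -> signed_perm_mx u g -> g c = 0 -> row0_col u = c.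
Proof.
move=> /in_G_affine [s [t u_aff]] u_g gc0.
apply: (row0_colP u_aff (can_inj (affK s t))).
by rewrite (signed_perm_mx_uniq u_aff u_g).
Qed.

Lemma row0_col_H h u : in_H n h -> in_G n u -> row0_col (h *m u) = row0_col u.
Proof.
move=> [Gh ah_ha] Gu; have [s [t h_aff]] := in_G_affine Gh.
have t0 := commute_a_aff h_aff ah_ha; subst t.
have [s' [t' u_aff]] := in_G_affine Gu.
apply: row0_colG (inG_mul Gh Gu) (signed_perm_mxM h_aff u_aff) _.
by rewrite /= (row0_colG_zero Gu u_aff) /aff flip0 addr0.
Qed.

Lemma dih_opE (i j : I) : dih_op i j = j + j - i.
Proof. by apply: val_inj; rewrite /dih_op /= modnDm addnn. Qed.

Lemma row0_col_conj u v : in_G n u -> in_G n v ->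
  row0_col (u *m invmx v *m mat_a n *m v) = dih_op (row0_col u) (row0_col v).
Proof.
move=> Gu Gv; have [s1 [t1 u_aff]] := in_G_affine Gu.
have [s2 [t2 v_aff]] := in_G_affine Gv.
have vV := signed_perm_mxV v_aff (affK s2 t2) (aff_invK s2 t2).
have w_aff := signed_perm_mxM (signed_perm_mxM (signed_perm_mxM u_aff vV) signed_perm_mx_a) v_aff.
apply: row0_colG (in_G_conj_a Gu Gv) w_aff _; rewrite dih_opE /=.
rewrite (aff_reflect _ (row0_colG_zero Gv v_aff)) [aff true 0 _]/aff /flip opprK addr0 affK.
exact: row0_colG_zero Gu u_aff.
Qed.

Lemma row0_col_mulb u : in_G n u -> row0_col (u *m mat_b n) = row0_col u + Zp1.
Proof.
move=> Gu; have [s [t u_aff]] := in_G_affine Gu.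
apply: row0_colG (inG_mul Gu (inG_b n)) (signed_perm_mxM u_aff signed_perm_mx_b) _.
by rewrite /= {2}/aff /flip -oppr_ord_max addrNK (row0_colG_zero Gu u_aff).
Qed.

Lemma row0_col_onto : (0 < n)%N -> forall k : I, exists2 u, in_G n u & row0_col u = k.
Proof.
move=> n_gt0 k; rewrite -(Zp1_mulrn k) ?double_gt0 //.
elim: (k : nat) => [|j [u Gu uj]].
  by exists 1%:M; [exact: inG_1 | exact: row0_colG (inG_1 n) (@signed_perm_mx1 _ _) _].
exists (u *m mat_b n); first exact: inG_mul Gu (inG_b n).
by rewrite row0_col_mulb // uj mulrSr.
Qed.

End Dihedral.

(* Reads off the index from some representative of P; the value is junk when
   P is not a right coset Hu with u in G. *)
Definition coset_index n (P : smx n -> Prop) : 'I_(mdim n) :=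
  row0_col (epsilon (inhabits 0) (fun u => in_G n u /\ P = rcoset n u)).

Lemma rcoset_refl n u : rcoset n u u.
Proof.
exists 1%:M; rewrite mul1mx; split=> //.
by split; [exact: inG_1 | rewrite mulmx1 mul1mx].
Qed.

Lemma coset_index_rcoset n u : in_G n u -> coset_index (rcoset n u) = row0_col u.
Proof.
move=> Gu; rewrite /coset_index.
have [] := epsilon_spec (inhabits 0) (fun u' => in_G n u' /\ rcoset n u = rcoset n u')
  (ex_intro _ u (conj Gu erefl)).
set u' := epsilon _ _ => Gu' Hu_Hu'.
have := rcoset_refl u; rewrite Hu_Hu' => -[h [Hh ->]].
by rewrite row0_col_H.
Qed.

Theorem mainTheorem5 (n : nat) (hn : (1 <= n)%N) :
  exists f : (smx n -> Prop) -> 'I_(mdim n),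
    (forall u v : smx n, in_G n u -> in_G n v ->
       f (rcoset n (u *m invmx v *m mat_a n *m v))
       = dih_op (f (rcoset n u)) (f (rcoset n v)))
    /\ (forall k : 'I_(mdim n), exists u : smx n, in_G n u /\ f (rcoset n u) = k).
Proof.
exists (@coset_index n); split.
  move=> u v Gu Gv; rewrite !coset_index_rcoset ?row0_col_conj //.
  exact: in_G_conj_a.
move=> k; have [u Gu uk] := row0_col_onto hn k.
by exists u; rewrite coset_index_rcoset.
Qed.
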